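(* Let $n\ge d$, $\mathbf X\in\mathbb R^{n\times d}$ with full column rank, $1\le k<d$, and $\mathbf y\in\mathbb R^n$ with $\hat\sigma_{1:k}=\|(\mathbf I-\mathbf P_{-1:k})\mathbf y\|>0$. Let $\hat{\boldsymbol\beta}_{\mathrm{OLS}}=(\mathbf X^T\mathbf X)^{-1}\mathbf X^T\mathbf y$ and $\mathbf u=\mathbf V^T(\mathbf y-\mathbf P_{-1:k}\mathbf y)/\hat\sigma_{1:k}$. Then $$\hat{\boldsymbol\beta}_{1:k,\mathrm{OLS}}=\hat\sigma_{1:k}(\mathbf V_{1:k}^T\mathbf X_{1:k})^{-1}\mathbf u_{1:k}.$$
   Context: $\mathbf A_i$, $\mathbf A_{1:i}$, $\mathbf A_{-1:i}$ denote the $i$-th column, first $i$ columns, and submatrix with first $i$ columns removed (similarly for vector entries). $\mathbf P_{-1:i}$ is the orthogonal projection onto the column space of $\mathbf X_{-1:i}$. $\mathbf V\in\mathbb R^{n\times(n-d+k)}$ has orthonormal columns spanning the orthogonal complement of the column space of $\mathbf X_{-1:k}$, with first $k$ columns $\mathbf V_i=(\mathbf I-\mathbf P_{-1:i})\mathbf X_i/\|(\mathbf I-\mathbf P_{-1:i})\mathbf X_i\|$. *)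

From HB Require Import structures.
From mathcomp Require Import all_boot all_order all_algebra.
Set Implicit Arguments. Unset Strict Implicit. Unset Printing Implicit Defensive.
Import Order.TTheory GRing.Theory Num.Theory.
Local Open Scope ring_scope.

Definition vnorm (R : rcfType) (n : nat) (v : 'cV[R]_n) : R :=
  Num.sqrt ((v^T *m v) 0 0).

(* B := row_base A^T is a row-free matrix whose rows span the column space
   of A, so B *m B^T is invertible and B^T (B B^T)^-1 B is the orthogonal
   projection onto that space (A need not have full column rank). *)
Definition projmx (R : rcfType) (n r : nat) (A : 'M[R]_(n, r)) : 'M[R]_n :=
  let B := row_base A^T in (B^T *m invmx (B *m B^T)) *m B.

(* X with its first i columns (0-based indices < i) replaced by zero columns;
   it has the same column space as the submatrix X_{-1:i} of the paper. *)
Definition dropcols (R : rcfType) (n d : nat) (X : 'M[R]_(n, d)) (i : nat)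
  : 'M[R]_(n, d) :=
  \matrix_(r, j) (if (i <= j)%N then X r j else 0).

From HB Require Import structures.
From mathcomp Require Import all_boot all_order all_algebra.
Import Order.TTheory GRing.Theory Num.Theory.
Local Open Scope ring_scope.
Set Implicit Arguments. Unset Strict Implicit. Unset Printing Implicit Defensive.

(* Let r = y - X beta be the least-squares residual, so X^T r = 0.  For i <= k,
   V_i is proportional to (I - P_{-1:i}) X_i, hence orthogonal to every X_j with
   j > i (so to X_{-1:k} and to P_{-1:k} y) and, as P_{-1:i} r = 0, also to r.
   Expanding y = X_{1:k} beta_{1:k} + X_{-1:k} beta_{-1:k} + r therefore gives
   sigma u_{1:k} = V_{1:k}^T y = C beta_{1:k} with C = V_{1:k}^T X_{1:k}.  The
   matrix C is triangular with diagonal entries ||(I - P_{-1:i}) X_i||, which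
   are nonzero because X has full column rank, so C is invertible. *)

Lemma mulmx_entry (R : pzRingType) a b c
    (A : 'M[R]_(a, b)) (B : 'M[R]_(b, c)) i j :
  (A *m B) i j = (row i A *m col j B) 0 0.
Proof. by rewrite !mxE; apply: eq_bigr => l _; rewrite !mxE. Qed.

Section Projection.
Variable R : rcfType.

Lemma mulmx_trmx_eq0 a b (M : 'M[R]_(a, b)) : M *m M^T = 0 -> M = 0.
Proof.
move=> MMt0; apply/matrixP => i j.
have := congr1 (fun N : 'M[R]_a => N i i) MMt0; rewrite !mxE.
under eq_bigr do rewrite mxE.
move/psumr_eq0P => sq0.
have /eqP := sq0 (fun l _ => sqr_ge0 (M i l)) j isT.
by rewrite mulf_eq0 orbb => /eqP ->.
Qed.

Lemma unitmx_mul_trmx a b (B : 'M[R]_(a, b)) :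
  row_free B -> B *m B^T \in unitmx.
Proof.
move=> freeB; rewrite -row_free_unit -kermx_eq0.
set K := kermx (B *m B^T).
have : (K *m B) *m (K *m B)^T = 0.
  by rewrite trmx_mul !mulmxA -(mulmxA _ B) mulmx_ker mul0mx.
by move/mulmx_trmx_eq0/eqP; rewrite mulmx_free_eq0.
Qed.

Variables (n r : nat) (A : 'M[R]_(n, r)).
Local Notation P := (projmx A).

(* Abstracting row_base A^T keeps rewrite from unfolding it. *)
Lemma projmxP : exists s (B : 'M[R]_(s, n)),
  [/\ P = B^T *m invmx (B *m B^T) *m B, B *m B^T \in unitmx,
      (A^T <= B)%MS & (B <= A^T)%MS].
Proof.
exists _, (row_base A^T); split; rewrite ?eq_row_base //.
exact/unitmx_mul_trmx/row_base_free.
Qed.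

Lemma projmx_tr : P^T = P.
Proof.
have [s [B [-> _ _ _]]] := projmxP.
by rewrite !trmx_mul trmxK trmx_inv trmx_mul trmxK mulmxA.
Qed.

Lemma projmx_idem : P *m P = P.
Proof.
have [s [B [-> uBBt _ _]]] := projmxP.
by rewrite -!mulmxA (mulmxA B) (mulmxA (B *m B^T)) mulmxV // mul1mx.
Qed.

Lemma projmx_mul : P *m A = A.
Proof.
apply: trmx_inj; rewrite trmx_mul projmx_tr.
have [s [B [-> uBBt AB _]]] := projmxP.
case/submxP: AB => L ->.
by rewrite -!mulmxA (mulmxA B) (mulmxA (B *m B^T)) mulmxV // mul1mx.
Qed.

Lemma mulmx_compl_projmx : (1%:M - P) *m A = 0.
Proof. by rewrite mulmxBl mul1mx projmx_mul subrr. Qed.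

Lemma compl_projmx_idem : (1%:M - P) *m (1%:M - P) = 1%:M - P.
Proof.
by rewrite mulmxBl mulmxBr !mul1mx mulmxBr mulmx1 projmx_idem subrr subr0.
Qed.

Lemma projmx_orth c (v : 'M[R]_(n, c)) : A^T *m v = 0 -> P *m v = 0.
Proof.
have [s [B [-> _ _ BA]]] := projmxP.
case/submxP: BA => K -> Av0.
by rewrite -!mulmxA Av0 !mulmx0.
Qed.

Lemma projmx_range c (v : 'M[R]_(n, c)) : exists z, P *m v = A *m z.
Proof.
have [s [B [-> _ _ BA]]] := projmxP.
case/submxP: BA => K BK.
exists (K^T *m invmx (B *m B^T) *m B *m v).
by rewrite {1}BK trmx_mul trmxK !mulmxA.
Qed.

Lemma tr_compl_projmx_mul (x : 'cV[R]_n) : ((1%:M - P) *m x)^T *m A = 0.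
Proof.
rewrite trmx_mul linearB /= trmx1 projmx_tr -mulmxA.
by rewrite mulmx_compl_projmx mulmx0.
Qed.

Lemma tr_compl_projmx_orth (x : 'cV[R]_n) c (v : 'M[R]_(n, c)) :
  A^T *m v = 0 -> ((1%:M - P) *m x)^T *m v = x^T *m v.
Proof.
move=> Av0; rewrite trmx_mul linearB /= trmx1 projmx_tr -mulmxA.
by rewrite mulmxBl mul1mx projmx_orth // subr0.
Qed.

Lemma tr_compl_projmx_mul_self (x : 'cV[R]_n) :
  let w := (1%:M - P) *m x in w^T *m x = w^T *m w.
Proof.
rewrite /= trmx_mul linearB /= trmx1 projmx_tr -!mulmxA.
by rewrite (mulmxA (1%:M - P)) compl_projmx_idem.
Qed.

End Projection.

Section Norm.
Variables (R : rcfType) (n : nat).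
Implicit Types v : 'cV[R]_n.

Definition normalize v := (vnorm v)^-1 *: v.

Lemma trmx_mul_self_ge0 v : 0 <= (v^T *m v) 0 0.
Proof. by rewrite mxE; apply: sumr_ge0 => l _; rewrite !mxE -expr2 sqr_ge0. Qed.

Lemma sqr_vnorm v : vnorm v ^+ 2 = (v^T *m v) 0 0.
Proof. exact/sqr_sqrtr/trmx_mul_self_ge0. Qed.

Lemma vnorm_eq0 v : (vnorm v == 0) = (v == 0).
Proof.
apply/idP/eqP => [|->]; last by rewrite /vnorm trmx0 mul0mx mxE sqrtr0.
rewrite -sqrf_eq0 sqr_vnorm => /eqP vv0.
apply: trmx_inj; rewrite trmx0; apply: mulmx_trmx_eq0.
by rewrite trmxK [LHS]mx11_scalar vv0 raddf0.
Qed.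

Lemma tr_normalize_compl_projmx_mul r (A : 'M[R]_(n, r)) (x : 'cV[R]_n) :
  let w := (1%:M - projmx A) *m x in ((normalize w)^T *m x) 0 0 = vnorm w.
Proof.
rewrite /= /normalize linearZ -scalemxAl tr_compl_projmx_mul_self.
rewrite mxE -sqr_vnorm; set w := _ *m x.
have [->|nz] := eqVneq (vnorm w) 0; first by rewrite invr0 mul0r.
by rewrite expr2 mulKf.
Qed.

End Norm.

Section DropColumns.
Variables (R : rcfType) (n d : nat) (X : 'M[R]_(n, d)).

Lemma dropcolsE i : dropcols X i = X *m diag_mx (\row_(j < d) (i <= j)%:R).
Proof.
rewrite mul_mx_diag; apply/matrixP => a b; rewrite !mxE.
by case: leqP; rewrite ?mulr1 ?mulr0.
Qed.

Lemma col_dropcols i (j : 'I_d) : (i <= j)%N -> col j (dropcols X i) = col j X.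
Proof. by move=> ij; apply/matrixP => a b; rewrite !mxE ij. Qed.

Lemma dropcols_orth i c (v : 'M[R]_(n, c)) :
  X^T *m v = 0 -> (dropcols X i)^T *m v = 0.
Proof. by rewrite dropcolsE trmx_mul -mulmxA => ->; rewrite mulmx0. Qed.

Lemma compl_projmx_dropcols_neq0 i (j : 'I_d) : \rank X = d -> (j < i)%N ->
  (1%:M - projmx (dropcols X i)) *m col j X != 0.
Proof.
move=> rankX ji; apply/eqP; rewrite mulmxBl mul1mx => /eqP; rewrite subr_eq0.
have [z ->] := projmx_range (dropcols X i) (col j X).
rewrite dropcolsE colE -mulmxA -subr_eq0 -mulmxBr -trmx_eq0 trmx_mul.
rewrite mulmx_free_eq0 ?trmx_eq0 ?subr_eq0; last first.
  by rewrite /row_free mxrank_tr rankX.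
move/eqP/(congr1 (fun v : 'cV[R]_d => v j 0)).
by rewrite mul_diag_mx !mxE eqxx leqNgt ji mul0r; apply/eqP; rewrite oner_eq0.
Qed.

End DropColumns.

Section LeadingDirections.
Variables (R : rcfType) (n k m : nat).
Variables (X : 'M[R]_(n, k + m)) (Q : 'M[R]_(n, k)).
Local Notation w i :=
  ((1%:M - projmx (dropcols X (nat_of_ord i).+1)) *m col (lshift m i) X).
Hypothesis colQ : forall i : 'I_k, col i Q = normalize (w i).

Lemma tr_colQ_mul (i : 'I_k) c (Z : 'M[R]_(n, c)) :
  (col i Q)^T *m Z = (vnorm (w i))^-1 *: ((w i)^T *m Z).
Proof. by rewrite colQ linearZ -scalemxAl. Qed.

Lemma tr_colQ_mul_col (i : 'I_k) (j : 'I_(k + m)) :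
  (i < j)%N -> (col i Q)^T *m col j X = 0.
Proof.
move=> ij; rewrite tr_colQ_mul -(col_dropcols X ij) [col j _]colE mulmxA.
by rewrite tr_compl_projmx_mul mul0mx scaler0.
Qed.

Lemma trQ_mul_rsub : Q^T *m rsubmx X = 0.
Proof.
apply/matrixP => a b; rewrite mulmx_entry -tr_col col_rsubmx.
by rewrite tr_colQ_mul_col ?mxE //= (leq_trans (ltn_ord a)) ?leq_addr.
Qed.

Lemma trQ_mul_lsub_trig : is_trig_mx (Q^T *m lsubmx X).
Proof.
apply/is_trig_mxP => a b ab.
by rewrite mulmx_entry -tr_col col_lsubmx tr_colQ_mul_col ?mxE.
Qed.

Lemma trQ_mul_lsub_diag (i : 'I_k) : (Q^T *m lsubmx X) i i = vnorm (w i).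
Proof.
by rewrite mulmx_entry -tr_col col_lsubmx colQ tr_normalize_compl_projmx_mul.
Qed.

Lemma trQ_mul_lsub_unit : \rank X = (k + m)%N -> Q^T *m lsubmx X \in unitmx.
Proof.
move=> rankX; rewrite unitmxE unitfE det_trig ?trQ_mul_lsub_trig //.
apply/prodf_neq0 => i _; rewrite trQ_mul_lsub_diag vnorm_eq0.
exact: compl_projmx_dropcols_neq0.
Qed.

Lemma trQ_mul_projmx_rsub : Q^T *m projmx (rsubmx X) = 0.
Proof.
have [z Pz] := projmx_range (rsubmx X) 1%:M.
by rewrite -[projmx _]mulmx1 Pz mulmxA trQ_mul_rsub mul0mx.
Qed.

Lemma trQ_mul_orth c (v : 'M[R]_(n, c)) : X^T *m v = 0 -> Q^T *m v = 0.
Proof.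
move=> Xv0; apply/row_matrixP => i; rewrite row_mul row0 -tr_col tr_colQ_mul.
rewrite tr_compl_projmx_orth ?dropcols_orth //.
by rewrite tr_col -row_mul Xv0 row0 scaler0.
Qed.

Lemma trQ_mul_lsq_solution (y : 'cV[R]_n) (b : 'cV[R]_(k + m)) :
  X^T *m (y - X *m b) = 0 -> Q^T *m y = Q^T *m lsubmx X *m usubmx b.
Proof.
move=> normal_eq.
have -> : y = lsubmx X *m usubmx b + rsubmx X *m dsubmx b + (y - X *m b).
  by rewrite -mul_row_col hsubmxK vsubmxK addrC subrK.
rewrite mulmxDr (trQ_mul_orth normal_eq) addr0 mulmxDr.
by rewrite [_ *m (rsubmx X *m _)]mulmxA trQ_mul_rsub mul0mx addr0 mulmxA.
Qed.

End LeadingDirections.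

Lemma ols_residual_orth (R : comUnitRingType) n d
    (X : 'M[R]_(n, d)) (y : 'cV[R]_n) :
  X^T *m X \in unitmx -> X^T *m (y - X *m (invmx (X^T *m X) *m X^T *m y)) = 0.
Proof. by move=> uXtX; rewrite mulmxBr !mulmxA mulmxV // mul1mx subrr. Qed.

Theorem lemmaC5 (R : rcfType) (k m p : nat)
  (X : 'M[R]_(k + m + p, k + m)) (y : 'cV[R]_(k + m + p))
  (V : 'M[R]_(k + m + p, k + p)) :
  (1 <= k)%N -> (1 <= m)%N ->
  \rank X = (k + m)%N ->
  (* V has orthonormal columns *)
  V^T *m V = 1%:M ->
  (* the columns of V span the orthogonal complement of col(X_{-1:k}) *)
  (forall v : 'cV[R]_(k + m + p),
      (v^T *m rsubmx X == 0) = (v^T <= V^T)%MS) ->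
  (* first k columns: V_i = (I - P_{-1:i}) X_i / ||(I - P_{-1:i}) X_i||
     (i 1-based in the paper; here i0 = i - 1 is 0-based) *)
  (forall i0 : 'I_k,
      let w := (1%:M - projmx (dropcols X i0.+1)) *m col (lshift m i0) X in
      col (lshift p i0) V = (vnorm w)^-1 *: w) ->
  let sigma := vnorm ((1%:M - projmx (rsubmx X)) *m y) in
  0 < sigma ->
  let beta := invmx (X^T *m X) *m X^T *m y in
  let u := sigma^-1 *: (V^T *m (y - projmx (rsubmx X) *m y)) in
  usubmx beta = sigma *: (invmx ((lsubmx V)^T *m lsubmx X) *m usubmx u).
Proof.
(* Only the first k columns of V enter. *)
move=> _ _ rankX _ _ colV sigma sigma_gt0 beta u.
have colV1 (i : 'I_k) : col i (lsubmx V) =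
    normalize ((1%:M - projmx (dropcols X i.+1)) *m col (lshift m i) X).
  by rewrite col_lsubmx colV.
have uXtX : X^T *m X \in unitmx.
  by rewrite -[X in _ *m X]trmxK unitmx_mul_trmx // /row_free mxrank_tr rankX.
have Xr0 : X^T *m (y - X *m beta) = 0 by exact: ols_residual_orth.
have -> : usubmx u = sigma^-1 *: ((lsubmx V)^T *m y).
  rewrite /u linearZ /= -mul_usub_mx -trmx_lsub mulmxBr mulmxA.
  by rewrite (trQ_mul_projmx_rsub colV1) mul0mx subr0.
rewrite (trQ_mul_lsq_solution colV1 Xr0) -scalemxAr.
by rewrite mulKmx ?(trQ_mul_lsub_unit colV1) // scalerA mulfV ?gt_eqF ?scale1r.
Qed.
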